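(* Let $\alpha(x)$ and $\beta(x)$ be real rational functions each of the form \[x-\tau_0-\sum_{m=1}^{M}\frac{\lambda_m}{x-\tau_m}\] with finitely many terms, real numbers $\tau_m$, and real $\lambda_m>0$ (depending on the function). Assume that at least one of $\alpha,\beta$ has at least one pole. Let $\lambda>0$ and $\theta\in\mathbb{R}$. If $\beta(\theta)=0$ and $\theta$ is not a pole of $\alpha$, then there exists $\theta'\in(\theta-\sqrt{\lambda},\theta+\sqrt{\lambda})$ such that $\beta(\theta')$ is neither $0$ nor a pole, and $\alpha(\theta')-\frac{\lambda}{\beta(\theta')}=0$. *)

From mathcomp Require Import all_boot all_order all_algebra.
From mathcomp Require Import reals.
Set Implicit Arguments. Unset Strict Implicit. Unset Printing Implicit Defensive.
Import Order.TTheory GRing.Theory Num.Theory.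
Local Open Scope ring_scope.

(* A rational function of the form
     x - tau0 - \sum_{m=1}^M lambda_m / (x - tau_m)
   is encoded by tau0 and the finite list of pairs (lambda_m, tau_m). *)
Record pfrac (R : realType) := PFrac { pf_tau0 : R; pf_terms : seq (R * R) }.

Definition pf_valid (R : realType) (f : pfrac R) : Prop :=
  all (fun p : R * R => 0 < p.1) (pf_terms f).

Definition pf_pole (R : realType) (f : pfrac R) (x : R) : bool :=
  x \in map snd (pf_terms f).

Definition pf_has_pole (R : realType) (f : pfrac R) : bool :=
  pf_terms f != [::].

(* value of f at x (meaningful when x is not a pole) *)
Definition pf_eval (R : realType) (f : pfrac R) (x : R) : R :=
  x - pf_tau0 f - \sum_(p <- pf_terms f) p.1 / (x - p.2).

From mathcomp Require Import all_boot all_order all_algebra.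
From mathcomp Require Import reals.
From mathcomp Require Import ring lra.
Set Implicit Arguments.
Unset Strict Implicit.
Unset Printing Implicit Defensive.
Import Order.TTheory GRing.Theory Num.Theory.
Local Open Scope ring_scope.

(* Between consecutive poles such an f is increasing with slope > 1:
   f(b) - f(a) = (b - a) (1 + S(a, b)) with
   S(a, b) = sum_m lambda_m / ((a - tau_m)(b - tau_m)) > 0.
   Reflecting x |-> -x if necessary, assume alpha(theta) >= 0 = beta(theta), so
   that alpha(b) beta(b) >= (b - theta)^2 (1 + S_alpha(theta, b) + S_beta(theta, b)).
   If no pole lies in (theta, theta + sqrt lambda], take b = theta + sqrt lambda:
   the bound is lambda (1 + S) > lambda.  Otherwise, just before the first such
   pole its term alone makes the bound exceed lambda.  The intermediate value
   theorem for alpha beta on [theta, b], which is a rational function whose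
   denominator does not vanish there, gives alpha(theta') beta(theta') = lambda. *)

Section PartialFractions.
Variable R : realType.
Implicit Types (f g alpha beta : pfrac R) (s : seq (R * R)) (a b c x y lam theta : R).

Definition cross_sum s x y : R := \sum_(p <- s) p.1 / ((x - p.2) * (y - p.2)).

Definition pole_free s a b : bool := all (fun p : R * R => (p.2 < a) || (b < p.2)) s.

Lemma pole_free_notin s a b x : pole_free s a b -> a <= x <= b -> x \notin map snd s.
Proof.
move=> /allP free /andP[ax xb]; apply/mapP => -[p ps xp].
by case/orP: (free p ps); lra.
Qed.

Lemma pole_free_above s a b : a \notin map snd s ->
  (forall t, t \in map snd s -> a < t -> b < t) -> pole_free s a b.
Proof.
move=> na above; apply/allP => p ps; have pt := map_f snd ps.
case: (ltgtP p.2 a) => // [/(above _ pt) -> | pa]; first by rewrite orbT.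
by rewrite -pa pt in na.
Qed.

Lemma pole_free_or_first_pole s a c : a < c -> a \notin map snd s ->
  pole_free s a c \/
  exists2 q, q \in s & a < q.2 <= c /\ forall b, b < q.2 -> pole_free s a b.
Proof.
move=> ac na; pose m := \big[Num.min/c]_(t <- map snd s | a < t) t.
have m_le_c : m <= c by apply: bigmin_le_id.
have m_le t : t \in map snd s -> a < t -> m <= t by apply: ge_bigmin_seq.
have [a_lt_m m_mem] : a < m /\ (m = c \/ m \in map snd s).
  rewrite /m big_seq_cond.
  apply: (big_ind (fun x => a < x /\ (x = c \/ x \in map snd s)))
    => [|x y + + | t /andP[ts ta]].
  - by split; [|left].
  - by rewrite /Order.min; case: ifP.
  - by split=> //; right.
case: (boolP (m \in map snd s)) => [/mapP[q qs mq] | nm].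
  right; exists q => //; rewrite -mq; split=> [|b bm]; first by rewrite a_lt_m.
  by apply: pole_free_above => // t ts ta; apply: lt_le_trans bm (m_le t ts ta).
left; have mc : m = c by case: m_mem => // mp; rewrite mp in nm.
apply: pole_free_above => // t ts ta; rewrite -mc lt_neqAle m_le // andbT.
by apply: contraNneq nm => ->.
Qed.

Lemma pf_eval_sub f x y : ~~ pf_pole f x -> ~~ pf_pole f y ->
  pf_eval f y - pf_eval f x = (y - x) * (1 + cross_sum (pf_terms f) x y).
Proof.
rewrite /pf_pole /pf_eval /cross_sum => nx ny.
have -> : (y - x) * (1 + \sum_(p <- pf_terms f) p.1 / ((x - p.2) * (y - p.2)))
    = (y - x) + (\sum_(p <- pf_terms f) p.1 / (x - p.2)
                 - \sum_(p <- pf_terms f) p.1 / (y - p.2)).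
  rewrite mulrDr mulr1 mulr_sumr -sumrB; congr (_ + _); apply: eq_big_seq => p ps.
  have px : x - p.2 != 0 by rewrite subr_eq0; apply: contraNneq nx => ->; apply: map_f.
  have py : y - p.2 != 0 by rewrite subr_eq0; apply: contraNneq ny => ->; apply: map_f.
  by field; rewrite px py.
ring.
Qed.

Lemma cross_term_gt0 a b (p : R * R) : a <= b -> 0 < p.1 -> (p.2 < a) || (b < p.2) ->
  0 < p.1 / ((a - p.2) * (b - p.2)).
Proof.
move=> ab p1 p2; apply: divr_gt0 => //.
by case/orP: p2 => p2; [apply: mulr_gt0 | rewrite -mulrNN; apply: mulr_gt0]; lra.
Qed.

Section CrossSum.
Variables (s : seq (R * R)) (a b : R).
Hypotheses (pos : all (fun p : R * R => 0 < p.1) s) (free : pole_free s a b) (ab : a <= b).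

Lemma cross_sum_ge_term q : q \in s -> q.1 / ((a - q.2) * (b - q.2)) <= cross_sum s a b.
Proof.
move=> qs; rewrite /cross_sum (big_rem _ qs) /= lerDl big_seq.
apply: sumr_ge0 => p /mem_rem ps; apply/ltW/cross_term_gt0 => //.
  exact: (allP pos).
exact: (allP free).
Qed.

Lemma cross_sum_gt0 : s != [::] -> 0 < cross_sum s a b.
Proof.
move=> s0; pose q := head (0, 0) s.
have qs : q \in s by rewrite /q; case: (s) s0 => // ? ? _; apply: mem_head.
apply: (lt_le_trans _ (cross_sum_ge_term qs)); apply: cross_term_gt0 => //.
  exact: (allP pos).
exact: (allP free).
Qed.

Lemma cross_sum_ge0 : 0 <= cross_sum s a b.
Proof.
have [-> | s0] := eqVneq s [::]; first by rewrite /cross_sum big_nil.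
exact/ltW/cross_sum_gt0.
Qed.

End CrossSum.

Lemma cross_sum_cat s1 s2 x y :
  cross_sum (s1 ++ s2) x y = cross_sum s1 x y + cross_sum s2 x y.
Proof. exact: big_cat. Qed.

Lemma pf_eval_mul_ge f g a b : pf_valid f -> pf_valid g -> a <= b ->
  pole_free (pf_terms f) a b -> pole_free (pf_terms g) a b ->
  0 <= pf_eval f a -> 0 <= pf_eval g a ->
  (b - a) ^+ 2 * (1 + cross_sum (pf_terms f ++ pf_terms g) a b)
    <= pf_eval f b * pf_eval g b.
Proof.
move=> vf vg ab ff fg fa ga.
have aab : a <= a <= b by rewrite lexx.
have bab : a <= b <= b by rewrite ab lexx.
have Ef := pf_eval_sub (pole_free_notin ff aab) (pole_free_notin ff bab).
have Eg := pf_eval_sub (pole_free_notin fg aab) (pole_free_notin fg bab).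
have Sf := cross_sum_ge0 vf ff ab; have Sg := cross_sum_ge0 vg fg ab.
rewrite cross_sum_cat.
move: Ef Eg Sf Sg; set u := b - a; set sf := cross_sum _ a b; set sg := cross_sum _ a b.
move=> Ef Eg Sf Sg; have u0 : 0 <= u by rewrite subr_ge0.
have uf : 0 <= u * (1 + sf) by apply: mulr_ge0; lra.
have ug : 0 <= u * (1 + sg) by apply: mulr_ge0; lra.
apply: le_trans (ler_pM uf ug _ _); last 2 first.
- by rewrite -Ef gerBl.
- by rewrite -Eg gerBl.
have : 0 <= u ^+ 2 * (sf * sg) by apply: mulr_ge0; [apply: sqr_ge0 | apply: mulr_ge0].
have -> : u * (1 + sf) * (u * (1 + sg)) = u ^+ 2 * (1 + (sf + sg)) + u ^+ 2 * (sf * sg)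
  by ring.
lra.
Qed.

Lemma pf_eval_fraction f : exists N D : {poly R}, forall x, ~~ pf_pole f x ->
  D.[x] != 0 /\ N.[x] = pf_eval f x * D.[x].
Proof.
case: f => t0 s; rewrite /pf_pole /pf_eval /=.
elim: s => [|p s [N [D ND]]].
  by exists ('X - t0%:P), 1 => x _; rewrite big_nil !hornerE oner_neq0; split=> //; ring.
exists (N * ('X - p.2%:P) - p.1%:P * D), (D * ('X - p.2%:P)) => x.
rewrite in_cons negb_or big_cons => /andP[xp xs]; have [Dx Nx] := ND x xs.
have xp' : x - p.2 != 0 by rewrite subr_eq0.
rewrite !(hornerD, hornerN, hornerM, hornerX, hornerC) Nx mulf_neq0 //.
by split=> //; field.
Qed.

Lemma rational_ivt (h : R -> R) (N D : {poly R}) a b c : a <= b ->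
  (forall x, a <= x <= b -> D.[x] != 0 /\ N.[x] = h x * D.[x]) ->
  h a <= c <= h b -> exists2 x, a <= x <= b & h x = c.
Proof.
move=> ab ND /andP[hac hcb].
pose q := (N - c%:P * D) * D.
have qE x : a <= x <= b -> q.[x] = (h x - c) * D.[x] ^+ 2 /\ 0 < D.[x] ^+ 2.
  case/ND=> Dx Nx; rewrite exprn_even_gt0 //= Dx.
  by split=> //; rewrite /q !(hornerD, hornerN, hornerM, hornerC) Nx; ring.
have [qa Da] : q.[a] = (h a - c) * D.[a] ^+ 2 /\ 0 < D.[a] ^+ 2 by apply: qE; rewrite lexx ab.
have [qb Db] : q.[b] = (h b - c) * D.[b] ^+ 2 /\ 0 < D.[b] ^+ 2 by apply: qE; rewrite lexx ab.
have qab : q.[a] <= 0 <= q.[b].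
  rewrite qa qb; apply/andP; split; [apply: mulr_le0_ge0 | apply: mulr_ge0];
    by rewrite ?subr_le0 ?subr_ge0 // ltW.
have [x xab /rootP] := poly_ivt ab qab.
have [-> Dx] := qE x xab; move/eqP; rewrite mulf_eq0 (gt_eqF Dx) orbF subr_eq0.
by exists x => //; apply/eqP.
Qed.

Lemma pf_eval_mul_ivt f g a b c : a <= b ->
  pole_free (pf_terms f) a b -> pole_free (pf_terms g) a b ->
  pf_eval f a * pf_eval g a <= c <= pf_eval f b * pf_eval g b ->
  exists2 x, a <= x <= b & pf_eval f x * pf_eval g x = c.
Proof.
move=> ab ff fg; have [Nf [Df NDf]] := pf_eval_fraction f.
have [Ng [Dg NDg]] := pf_eval_fraction g.
apply: (rational_ivt (h := fun x => pf_eval f x * pf_eval g x) (N := Nf * Ng) (D := Df * Dg))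
  => // x xab.
have [Dfx Nfx] := NDf x (pole_free_notin ff xab).
have [Dgx Ngx] := NDg x (pole_free_notin fg xab).
by rewrite !hornerM Nfx Ngx mulf_neq0 //; split=> //; ring.
Qed.

(* For b = tau - k (tau - a) the bound equals (1 - k)^2 mu / k, which for
   k = mu / (2 (mu + lam)) is (mu + 2 lam)^2 / (2 (mu + lam)) > lam. *)
Lemma near_pole_point (mu a tau lam : R) : 0 < mu -> a < tau -> 0 < lam ->
  exists2 b, a < b < tau & lam < (b - a) ^+ 2 * (mu / ((a - tau) * (b - tau))).
Proof.
move=> mu0 atau lam0; pose k := mu / (2 * (mu + lam)).
have k0 : 0 < k by apply: divr_gt0 => //; lra.
have k1 : k < 1 by rewrite ltr_pdivrMr; lra.
have d0 : 0 < tau - a by rewrite subr_gt0.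
have dk0 : 0 < (tau - a) * k by apply: mulr_gt0.
have dk1 : (tau - a) * k < tau - a by rewrite gtr_pMr.
exists (tau - (tau - a) * k); first by apply/andP; split; lra.
have -> : (tau - (tau - a) * k - a) ^+ 2 * (mu / ((a - tau) * (tau - (tau - a) * k - tau)))
    = (mu + 2 * lam) ^+ 2 / (2 * (mu + lam)).
  rewrite /k; field; apply/and3P; split; [rewrite lt0r_neq0 | rewrite ltr0_neq0 |
    rewrite ltr0_neq0] => //; nra.
rewrite ltr_pdivlMr; nra.
Qed.

Lemma exists_pole_free_cross_sum_gt s a lam : all (fun p : R * R => 0 < p.1) s ->
  s != [::] -> a \notin map snd s -> 0 < lam ->
  exists b, [/\ a < b <= a + Num.sqrt lam, pole_free s a b &
                lam < (b - a) ^+ 2 * (1 + cross_sum s a b)].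
Proof.
move=> pos s0 na lam0; have sq0 : 0 < Num.sqrt lam by rewrite sqrtr_gt0.
have [free | [q qs [/andP[aq qc] freeq]]] :=
  pole_free_or_first_pole (ltr_pwDr sq0 (lexx a)) na.
  exists (a + Num.sqrt lam); split=> //; first by rewrite lexx andbT ltrDl.
  rewrite addrC addKr sqr_sqrtr ?ltW //.
  have := cross_sum_gt0 pos free (ltW (ltr_pwDr sq0 (lexx a))) s0; nra.
have [b /andP[ab bq] big] := near_pole_point ((allP pos) q qs) aq lam0.
exists b; split; [by rewrite ab; lra | exact: freeq |].
apply: (lt_le_trans big); apply: ler_wpM2l; first exact: sqr_ge0.
have := cross_sum_ge_term pos (freeq b bq) (ltW ab) qs.
have := cross_term_gt0 (ltW ab) ((allP pos) q qs) ((allP (freeq b bq)) q qs); lra.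
Qed.

Lemma exists_product_root_right alpha beta lam theta :
  pf_valid alpha -> pf_valid beta -> pf_has_pole alpha || pf_has_pole beta ->
  0 < lam -> ~~ pf_pole alpha theta -> ~~ pf_pole beta theta ->
  0 <= pf_eval alpha theta -> pf_eval beta theta = 0 ->
  exists2 x, theta < x < theta + Num.sqrt lam &
    [/\ ~~ pf_pole alpha x, ~~ pf_pole beta x & pf_eval alpha x * pf_eval beta x = lam].
Proof.
move=> va vb poles lam0 na nb a0 b0.
set s := pf_terms alpha ++ pf_terms beta.
have vs : all (fun p : R * R => 0 < p.1) s by rewrite all_cat va vb.
have s0 : s != [::] by rewrite -size_eq0 size_cat addn_eq0 negb_and !size_eq0.
have ns : theta \notin map snd s by rewrite map_cat mem_cat negb_or na nb.
have [b [/andP[tb bs] fs large]] := exists_pole_free_cross_sum_gt vs s0 ns lam0.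
move: fs; rewrite /pole_free all_cat -!/(pole_free _ _ _) => /andP[fa fb].
have b0' : 0 <= pf_eval beta theta by rewrite b0.
have ge := pf_eval_mul_ge va vb (ltW tb) fa fb a0 b0'.
have lam_between : pf_eval alpha theta * pf_eval beta theta <= lam
                    <= pf_eval alpha b * pf_eval beta b.
  by rewrite b0 mulr0 ltW //=; lra.
have [x /andP[tx xb] E] := pf_eval_mul_ivt (ltW tb) fa fb lam_between.
have txb : theta <= x <= b by rewrite tx xb.
exists x; last by split=> //; apply: pole_free_notin txb.
rewrite lt_neqAle tx andbT; apply/andP; split.
  by apply: contra_eq_neq E => <-; rewrite b0 mulr0 eq_sym lt0r_neq0.
have xb' : x < b by rewrite lt_neqAle xb andbT; apply: contra_eq_neq E => ->; lra.
lra.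
Qed.

Definition pf_reflect f : pfrac R :=
  PFrac (- pf_tau0 f) [seq (p.1, - p.2) | p <- pf_terms f].

Lemma pf_valid_reflect f : pf_valid (pf_reflect f) = pf_valid f.
Proof. by rewrite /pf_valid all_map. Qed.

Lemma pf_has_pole_reflect f : pf_has_pole (pf_reflect f) = pf_has_pole f.
Proof. by rewrite /pf_has_pole /=; case: (pf_terms f). Qed.

Lemma pf_pole_reflect f x : pf_pole (pf_reflect f) x = pf_pole f (- x).
Proof.
rewrite /pf_pole /= -map_comp (map_comp -%R snd) -{1}(opprK x).
exact: (mem_map (@oppr_inj _)).
Qed.

Lemma pf_eval_reflect f x : pf_eval (pf_reflect f) x = - pf_eval f (- x).
Proof.
rewrite /pf_eval /= big_map.
have -> : \sum_(p <- pf_terms f) p.1 / (x - - p.2)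
    = - \sum_(p <- pf_terms f) p.1 / (- x - p.2).
  by rewrite -sumrN; apply: eq_bigr => p _; rewrite -mulrN -invrN; congr (_ * _^-1); ring.
ring.
Qed.

Lemma exists_product_root alpha beta lam theta :
  pf_valid alpha -> pf_valid beta -> pf_has_pole alpha || pf_has_pole beta ->
  0 < lam -> ~~ pf_pole alpha theta -> ~~ pf_pole beta theta ->
  pf_eval beta theta = 0 ->
  exists2 x, theta - Num.sqrt lam < x < theta + Num.sqrt lam &
    [/\ ~~ pf_pole alpha x, ~~ pf_pole beta x & pf_eval alpha x * pf_eval beta x = lam].
Proof.
move=> va vb poles lam0 na nb b0; have sq0 : 0 < Num.sqrt lam by rewrite sqrtr_gt0.
have [a0 | a0] := leP 0 (pf_eval alpha theta).
  have [x /andP[tx xs] root] := exists_product_root_right va vb poles lam0 na nb a0 b0.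
  by exists x => //; apply/andP; split; lra.
have := exists_product_root_right (alpha := pf_reflect alpha) (beta := pf_reflect beta)
  (lam := lam) (theta := - theta).
rewrite !pf_valid_reflect !pf_has_pole_reflect !pf_pole_reflect !pf_eval_reflect !opprK b0.
case/(_ va vb poles lam0 na nb _ (oppr0 _)) => [|x /andP[tx xs]]; first lra.
rewrite !pf_pole_reflect !pf_eval_reflect mulrNN => -[nax nbx E].
by exists (- x); [apply/andP; split; lra | split].
Qed.

End PartialFractions.

Theorem lemma12 (R : realType) (alpha beta : pfrac R) (lam theta : R) :
  pf_valid alpha -> pf_valid beta ->
  pf_has_pole alpha || pf_has_pole beta ->
  0 < lam ->
  ~~ pf_pole beta theta -> pf_eval beta theta = 0 ->
  ~~ pf_pole alpha theta ->
  exists theta' : R,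
    [/\ theta - Num.sqrt lam < theta' < theta + Num.sqrt lam,
        ~~ pf_pole beta theta', pf_eval beta theta' != 0,
        ~~ pf_pole alpha theta' &
        pf_eval alpha theta' - lam / pf_eval beta theta' = 0].
Proof.
move=> va vb poles lam0 nb b0 na.
have [x xI [nax nbx E]] := exists_product_root va vb poles lam0 na nb b0.
have bx : pf_eval beta x != 0.
  by apply: contra_eq_neq E => ->; rewrite mulr0 eq_sym lt0r_neq0.
by exists x; split=> //; rewrite -E mulfK // subrr.
Qed.
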